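(* Let $(B,+,\cdot)$ be a finite simple left brace such that $(B,\cdot)$ is metabelian and all Sylow subgroups of $(B,\cdot)$ are abelian. If some Sylow subgroup of $(B,\cdot)$ is cyclic, then $|B|$ is a prime power; in fact $B$ is a cyclic trivial left brace.
   Context: A left brace is a set $B$ with two operations $+,\cdot$ such that $(B,+)$ is an abelian group, $(B,\cdot)$ is a group and $a(b+c)+a=ab+ac$ for all $a,b,c$; $\lambda_a(b)=ab-a$. A left ideal is a subgroup $L$ of $(B,+)$ with $\lambda_b(L)\subseteq L$ for all $b$; an ideal is a left ideal that is a normal subgroup of $(B,\cdot)$. $B$ is simple if $B\ne 0$ and its only ideals are $0$ and $B$. $B$ is trivial if $ab=a+b$ for all $a,b$; a cyclic trivial brace is one whose additive group is cyclic. A group is metabelian if its derived length is at most $2$. *)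

(* A finite left brace is represented by its multiplicative
   group (a finGroupType gT) together with an explicit additive structure
   (add, opp, zero) on the same carrier. *)
From HB Require Import structures.
From mathcomp Require Import all_boot all_fingroup all_solvable.
Set Implicit Arguments. Unset Strict Implicit. Unset Printing Implicit Defensive.
Local Open Scope group_scope.

Section Brace.
Variables (gT : finGroupType) (add : gT -> gT -> gT) (opp : gT -> gT) (zero : gT).

Definition is_abelian_group_add : Prop :=
  [/\ forall a b c, add a (add b c) = add (add a b) c,
      forall a b, add a b = add b a,
      forall a, add zero a = a
    & forall a, add (opp a) a = zero].

Definition is_left_brace : Prop :=
  is_abelian_group_add /\
  forall a b c, add (a * add b c) a = add (a * b) (a * c).

Definition lambda (a b : gT) : gT := add (a * b) (opp a).

Definition is_left_ideal (L : {set gT}) : Prop :=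
  [/\ zero \in L,
      {in L &, forall x y, add x y \in L},
      {in L, forall x, opp x \in L}
    & forall b, {in L, forall x, lambda b x \in L}].

Definition is_ideal (L : {set gT}) : Prop :=
  [/\ is_left_ideal L, group_set L & L <| [set: gT]].

Definition simple_brace : Prop :=
  [set zero] != [set: gT] /\
  forall L : {set gT}, is_ideal L -> L = [set zero] \/ L = [set: gT].

Definition trivial_brace : Prop := forall a b, a * b = add a b.

Definition additive_cyclic : Prop :=
  exists g : gT, forall x : gT, exists n : nat, x = iter n (add g) zero.

End Brace.

From HB Require Import structures.
From mathcomp Require Import all_boot all_fingroup all_solvable ssralg.
Set Implicit Arguments. Unset Strict Implicit. Unset Printing Implicit Defensive.

(* Write G for (B,.). As G is metabelian, a cyclic Sylow p-subgroup P either
   lies in the abelian group G', and is then normal, or G' is a p'-group, and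
   then a Hall p'-subgroup, which contains G', is normal. To see this take a
   complement H of P in N_G(P): coprime action on the cyclic p-group P gives
   either [P, H] = P, so that P <= G', or [P, H] = 1, in which case
   O_p'(G') H is a normal p'-subgroup with abelian quotient, hence contains G'.
   A normal Hall subgroup of G is an ideal of B, being also the Hall subgroup
   of (B,+) (lambda preserves additive orders), so simplicity forces G = P.
   Finally the lambda-fixed points of B form an ideal whose order is congruent
   to |B| = 0 mod p, so it is not 0; it is therefore B, i.e. B is trivial, and
   (B,+) = G is cyclic. *)

Section MetabelianSylow.
Local Open Scope group_scope.
Variable gT : finGroupType.
Implicit Types G H P : {group gT}.

Lemma coprime_cyclic_pgroup_cent_or_comm (p : nat) P H :
    p.-group P -> cyclic P -> H \subset 'N(P) -> coprime #|P| #|H| ->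
  H \subset 'C(P) \/ [~: P, H] = P.
Proof.
move=> pP cycP nPH coPH; have abP := cyclic_abelian cycP.
have sKP : [~: P, H] \subset P by rewrite commg_subl.
have nKH : H \subset 'N([~: P, H]) := commg_normr H P.
have defP : [~: P, H] * 'C_P(H) = P.
  apply/eqP; rewrite eqEsubset mulG_subG sKP subsetIl /= -quotientSK ?commg_norml //.
  rewrite coprime_quotient_cent ?abelian_sol //.
  by rewrite (setIidPl (quotient_cents2r (subxx _))).
have tiKC : [~: P, H] :&: 'C_P(H) = 1.
  by rewrite setIA (setIidPl sKP) coprime_abel_cent_TI.
have cCK : 'C_P(H) \subset 'C([~: P, H]) := subset_trans (subsetIl _ _) (centsS sKP abP).
have := cyclic_pgroup_dprod_trivg pP cycP (etrans (dprodE cCK tiKC) defP).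
by case=> [[_ /setIidPl] | [_ ->]]; [left; rewrite centsC | right].
Qed.

Lemma Frattini_der1 (p : nat) G P : p.-Sylow(G) P -> G^`(1) * 'N_G(P) = G.
Proof.
move=> sylP; have sPG := pHall_sub sylP.
have nMP : P \subset 'N(G^`(1)) := subset_trans sPG (der_norm 1 G).
have nsMPG : G^`(1) <*> P <| G by rewrite sub_der1_normal ?joing_subl // join_subG der_sub.
have := Frattini_arg nsMPG (pHall_subl (joing_subr _ _) (normal_sub nsMPG) sylP).
have sPN : P \subset 'N_G(P) by rewrite subsetI sPG normG.
by rewrite /= norm_joinEr // -mulgA (mulSGid sPN).
Qed.

(* Y := O_p'(G') H is normalized by G = G' N_G(P), and G = Y P. *)
Lemma metabelian_cent_complement_p'group (p : nat) G P H :
    G^`(2) = 1 -> p.-Sylow(G) P -> abelian P -> p^'.-group H ->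
    P * H = 'N_G(P) -> H \subset 'C(P) ->
  p^'.-group G^`(1).
Proof.
move=> dG2 sylP abP p'H defN cPH; set M := G^`(1).
have abM : abelian M by apply/derG1P.
have nsMG : M <| G := der_normal 1 G.
have [_ defM cQR _] := dprodP (nilpotent_pcoreC p (abelian_nil abM)).
set Q := 'O_p(M) in defM cQR; set R := 'O_p^'(M) in defM cQR.
have nsQG : Q <| G := char_normal_trans (pcore_char _ _) nsMG.
have nsRG : R <| G := char_normal_trans (pcore_char _ _) nsMG.
have sQP : Q \subset P :=
  normal_sub_max_pgroup (Hall_max sylP) (pcore_pgroup _ _) nsQG.
have sPG := pHall_sub sylP.
have sHG : H \subset G by rewrite (subset_trans (mulG_subr P H)) // defN subsetIl.
have nRG := normal_norm nsRG.
pose Y := (R <*> H)%G.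
have defY : Y :=: R * H := norm_joinEr (subset_trans sHG nRG).
have p'Y : p^'.-group Y by rewrite defY pgroupM pcore_pgroup p'H.
have nYP : P \subset 'N(Y).
  by rewrite defY normsM ?(subset_trans sPG nRG) // cents_norm // centsC.
have cQY : Q \subset 'C(Y).
  by rewrite defY centM subsetI centsC cQR centsC (centsS sQP cPH).
have subG_gens (K : {group gT}) :
    Q \subset K -> R \subset K -> P \subset K -> H \subset K -> G \subset K.
  by move=> sQK sRK sPK sHK; rewrite -(Frattini_der1 sylP) -defN -defM !mul_subG.
have sRY : R \subset Y := joing_subl R H.
have sHY : H \subset Y := joing_subr R H.
have nYG : G \subset 'N(Y).
  apply: subG_gens; [exact: cents_norm | exact: subset_trans sRY (normG Y)
    | exact: nYP | exact: subset_trans sHY (normG Y)].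
have sGYP : G \subset Y * P.
  have sYYP : Y \subset Y <*> P := joing_subl Y P.
  rewrite -norm_joinEr //; apply: subG_gens; [exact: subset_trans sQP (joing_subr Y P)
    | exact: subset_trans sRY sYYP | exact: joing_subr
    | exact: subset_trans sHY sYYP].
have abGY : abelian (G / Y).
  apply: abelianS (quotientS Y sGYP) _.
  by rewrite quotientMidl quotient_abelian.
exact: pgroupS (der1_min nYG abGY) p'Y.
Qed.

Lemma metabelian_cyclic_Sylow_sub_der1_or_p'group (p : nat) G P :
    G^`(2) = 1 -> p.-Sylow(G) P -> cyclic P ->
  P \subset G^`(1) \/ p^'.-group G^`(1).
Proof.
move=> dG2 sylP cycP; have [sPG pP _] := and3P sylP.
have sPN : P \subset 'N_G(P) by rewrite subsetI sPG normG.
have sylPN : p.-Sylow('N_G(P)) P := pHall_subl sPN (subsetIl _ _) sylP.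
have [H compH] := splitsP (SchurZassenhaus_split (pHall_Hall sylPN) (normalSG sPG)).
have [_ defN] := complP compH.
have [sHN p'H _] := and3P (etrans (esym (compl_pHall H sylPN)) compH).
have [sHG nPH] := subsetIP sHN.
have coPH : coprime #|P| #|H| := pnat_coprime pP p'H.
have [cPH | defP] := coprime_cyclic_pgroup_cent_or_comm pP cycP nPH coPH.
  by right; apply: metabelian_cent_complement_p'group (cyclic_abelian cycP) _ defN _.
by left; rewrite -defP commgSS.
Qed.

Lemma Sylow_sub_der1_normal (p : nat) G P :
  G^`(2) = 1 -> p.-Sylow(G) P -> P \subset G^`(1) -> P <| G.
Proof.
move=> dG2 sylP sPM; have abM : abelian G^`(1) by apply/derG1P.
have pP := pHall_pgroup sylP.
have nsQG := char_normal_trans (pcore_char p G^`(1)) (der_normal 1 G).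
suff -> : P :=: 'O_p(G^`(1)) by [].
have nsPM : P <| G^`(1) by rewrite -sub_abelian_normal.
apply/eqP; rewrite eqEsubset pcore_max //=.
exact: normal_sub_max_pgroup (Hall_max sylP) (pcore_pgroup _ _) nsQG.
Qed.

Lemma metabelian_cyclic_Sylow_pgroup (p : nat) G P :
    (forall (pi : nat_pred) H, pi.-Hall(G) H -> H <| G -> H :=: 1 \/ H :=: G) ->
    G^`(2) = 1 -> p.-Sylow(G) P -> cyclic P -> P :!=: 1 ->
  p.-group G.
Proof.
move=> normal_Hall dG2 sylP cycP ntP; have [sPG pP _] := and3P sylP.
have [sPM | p'M] := metabelian_cyclic_Sylow_sub_der1_or_p'group dG2 sylP cycP.
  have [P1 | <-] := normal_Hall _ _ sylP (Sylow_sub_der1_normal dG2 sylP sPM) => //.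
  by rewrite P1 eqxx in ntP.
have [K hallK] : exists K : {group gT}, p^'.-Hall(G) K.
  by apply: Hall_exists; apply/derivedP; exists 2.
have sMK := normal_sub_max_pgroup (Hall_max hallK) p'M (der_normal 1 G).
have [_ p'K p''iK] := and3P hallK.
have [K1 | KG] := normal_Hall _ _ hallK (sub_der1_normal sMK (pHall_sub hallK)).
  by move: p''iK; rewrite K1 indexg1 pnatNK.
case/negP: ntP; rewrite trivg_card1; apply/eqP.
by rewrite KG in p'K; apply: pnat_1 pP (pgroupS sPG p'K).
Qed.

End MetabelianSylow.

Record add_group := AddGroup {
  add_sort : finGroupType;
  add_op : add_sort -> add_sort -> add_sort;
  add_opp : add_sort -> add_sort;
  add_zero : add_sort;
  add_axioms : is_abelian_group_add add_op add_opp add_zero }.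

(* Two aliases of the carrier of a brace, equipping it with its addition as a
   zmodType (for ring-style algebra) and as a finGroupType (for finite group
   theory of (B,+)). *)
Definition add_zmod (A : add_group) : Type := add_sort A.
Definition add_fingroup (A : add_group) : Type := add_sort A.

Section AddGroupTheory.
Variable A : add_group.

Lemma add_opA : associative (@add_op A).
Proof. by case: (add_axioms A) => addA _ _ _ x y z; rewrite addA. Qed.
Lemma add_opC : commutative (@add_op A). Proof. by case: (add_axioms A). Qed.
Lemma add_0op : left_id (add_zero A) (@add_op A). Proof. by case: (add_axioms A). Qed.
Lemma add_Nop : left_inverse (add_zero A) (@add_opp A) (@add_op A).
Proof. by case: (add_axioms A). Qed.

End AddGroupTheory.

HB.instance Definition _ A := Finite.on (add_fingroup A).
HB.instance Definition _ A :=
  Finite_isGroup.Build (add_fingroup A) (@add_opA A) (@add_0op A) (@add_Nop A).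
HB.instance Definition _ A := Choice.on (add_zmod A).
HB.instance Definition _ A :=
  GRing.isZmodule.Build (add_zmod A) (@add_opA A) (@add_opC A) (@add_0op A) (@add_Nop A).

Section Brace.
Local Open Scope group_scope.
Variables (gT : finGroupType) (add : gT -> gT -> gT) (opp : gT -> gT) (zero : gT).
Hypothesis braceB : is_left_brace add opp zero.

Let A := AddGroup (proj1 braceB).
Local Notation V := (add_zmod A).
Local Notation lam := (lambda add opp).

Let addE x y : add x y = ((x : V) + (y : V))%R. Proof. by []. Qed.
Let oppE x : opp x = (- (x : V))%R. Proof. by []. Qed.
Let lambdaE a x : lam a x = (((a * x)%g : V) - (a : V))%R. Proof. by []. Qed.

Lemma brace_add_distr (a b c : gT) :
  ((a * add b c)%g : V) = (((a * b)%g : V) + ((a * c)%g : V) - (a : V))%R.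
Proof. by apply: (@GRing.addIr V a); rewrite GRing.subrK; apply: (proj2 braceB). Qed.

Lemma brace_zero : zero = 1.
Proof.
have : ((zero : V) + zero + 0 = (zero : V) + zero - (1%g : V))%R.
  by rewrite GRing.addr0; have := brace_add_distr 1 zero zero; rewrite !mul1g.
by move=> /(@GRing.addrI V) /esym /eqP; rewrite GRing.oppr_eq0 => /eqP.
Qed.

Lemma mul_lambda a b : a * b = add a (lam a b).
Proof. by rewrite addE lambdaE GRing.addrC GRing.subrK. Qed.

Lemma lambda_add a x y : lam a (add x y) = add (lam a x) (lam a y).
Proof. by rewrite !lambdaE !addE brace_add_distr GRing.addrACA GRing.addrA. Qed.

Lemma lambda0 a : lam a zero = zero.
Proof. by rewrite lambdaE {1}brace_zero mulg1 GRing.subrr. Qed.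

Lemma lambda_opp a x : lam a (opp x) = opp (lam a x).
Proof.
apply: (@GRing.addrI V (lam a x)); rewrite oppE GRing.subrr -addE -lambda_add.
by rewrite addE -oppE GRing.subrr lambda0.
Qed.

Lemma lambdaM a b x : lam (a * b) x = lam a (lam b x).
Proof.
rewrite [lam b x]lambdaE -oppE -addE lambda_add lambda_opp !lambdaE mulgA !addE !oppE.
by rewrite GRing.opprB GRing.addrA GRing.subrK.
Qed.

Lemma lambda_inj a : injective (lam a).
Proof. by move=> x y; rewrite !lambdaE => /(@GRing.addIr V) /mulgI. Qed.

Local Notation G := (add_fingroup A).

Lemma lambda_expg a (x : G) n : lam a (x ^+ n) = (lam a x : G) ^+ n.
Proof.
elim: n => [|n IHn]; first exact: lambda0.
by rewrite !expgS -IHn; apply: lambda_add.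
Qed.

Lemma lambda_pelt pi a (x : G) : pi.-elt x -> pi.-elt (lam a x : G).
Proof.
move=> pi_x; apply: pnat_dvd pi_x; rewrite order_dvdn -lambda_expg expg_order.
exact/eqP/lambda0.
Qed.

(* H coincides with the pi-elements of (B,+): these form a multiplicative
   subgroup as ab = a + lambda_a(b), and it has the order of H. *)
Lemma normal_Hall_left_ideal pi (H : {group gT}) :
  pi.-Hall([set: gT]) H -> H <| [set: gT] -> is_left_ideal add opp zero H.
Proof.
move=> hallH nsH.
have hallS : pi.-Hall([set: G]) 'O_pi([set: G]).
  by apply/nilpotent_pcore_Hall/abelian_nil/centsP => x _ y _; apply: add_opC.
have memS (x : G) : (x \in 'O_pi([set: G])) = pi.-elt x.
  by rewrite (mem_normal_Hall hallS (pcore_normal _ _)) ?inE.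
pose L := [set x : gT | (x : G) \in 'O_pi([set: G])].
have defL : L = H.
  have gL : group_set L.
    apply/group_setP; split=> [|x y]; rewrite !inE.
      by rewrite -brace_zero; apply: group1.
    move=> Sx Sy; rewrite mul_lambda; apply: (@groupM G) Sx _.
    by rewrite memS lambda_pelt -?memS.
  have cardL : #|L| = (#|gT|`_pi)%N.
    by rewrite cardsE (card_Hall hallS) cardsT.
  have piL : pi.-group (Group gL) by rewrite /pgroup /= cardL part_pnat.
  apply/eqP; rewrite eqEcard (sub_normal_Hall hallH nsH (subsetT (Group gL))) piL.
  by rewrite /= cardL (card_Hall hallH) cardsT.
rewrite -defL; split=> [|x y|x|b x]; rewrite !inE.
- exact: (@group1 G).
- exact: (@groupM G).
- exact: (@groupVr G).
- by rewrite !memS => /lambda_pelt.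
Qed.

Lemma simple_brace_normal_Hall pi (H : {group gT}) :
    simple_brace add opp zero -> pi.-Hall([set: gT]) H -> H <| [set: gT] ->
  H :=: 1 \/ H :=: [set: gT].
Proof.
move=> [_ simpleB] hallH nsH; rewrite set1gE -brace_zero; apply: simpleB.
by split; [apply: normal_Hall_left_ideal hallH nsH | apply: groupP |].
Qed.

(* Actions in MathComp act on the right, hence the inverse. *)
Definition lambda_act (x a : gT) : gT := lam a^-1 x.

Lemma lambda_act_is_action : is_action [set: gT] lambda_act.
Proof.
by split=> [a | x a b _ _]; [apply: lambda_inj | rewrite /lambda_act invMg lambdaM].
Qed.

Definition lambda_action := Action lambda_act_is_action.

Definition lambda_fix := [set x | [forall a, lam a x == x]].

Lemma lambda_fixP x : reflect (forall a, lam a x = x) (x \in lambda_fix).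
Proof. by rewrite inE; apply: (iffP forallP) => fix_x a; apply/eqP. Qed.

Lemma lambda_fix_ideal : abelian [set: gT] -> is_ideal add opp zero lambda_fix.
Proof.
move=> abB; have fix0 : zero \in lambda_fix by apply/lambda_fixP => a; apply: lambda0.
have fixD x y : x \in lambda_fix -> y \in lambda_fix -> add x y \in lambda_fix.
  move=> /lambda_fixP fix_x /lambda_fixP fix_y.
  by apply/lambda_fixP => a; rewrite lambda_add fix_x fix_y.
split; last by rewrite -sub_abelian_normal ?subsetT.
- split=> // [x /lambda_fixP fix_x | b x /lambda_fixP fix_x].
    by apply/lambda_fixP => a; rewrite lambda_opp fix_x.
  by rewrite fix_x; apply/lambda_fixP.
- apply/group_setP; split=> [|x y fix_x /[dup] /lambda_fixP fix_y].
    by rewrite -brace_zero.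
  by rewrite mul_lambda fix_y; apply: fixD.
Qed.

Lemma lambda_fix_card_mod (p : nat) :
  p.-group [set: gT] -> #|lambda_fix| = #|gT| %[mod p].
Proof.
move=> pB; rewrite -cardsT [in RHS](pgroup_fix_mod (to := lambda_action) pB); last first.
  by apply/subsetP => a _; rewrite !inE; apply/subsetP => x _; rewrite !inE.
congr (_ %% p); apply: eq_card => x.
apply/lambda_fixP/setIP => [fix_x | [_ /afixP fix_x] a].
  by split; [apply: in_setT | apply/afixP => a _; apply: fix_x].
by rewrite -[a]invgK; apply: fix_x; rewrite in_setT.
Qed.

Lemma simple_abelian_pgroup_trivial_brace (p : nat) :
    simple_brace add opp zero -> abelian [set: gT] -> prime p -> p %| #|gT| ->
    p.-group [set: gT] ->
  trivial_brace add.
Proof.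
move=> [_ simpleB] abB p_pr /eqP p_dvd pB.
have [fix0 | fixT] := simpleB _ (lambda_fix_ideal abB).
  have := lambda_fix_card_mod pB; rewrite fix0 cards1 p_dvd modn_small //.
  exact: prime_gt1.
move=> a b; rewrite mul_lambda.
by have /lambda_fixP -> : b \in lambda_fix by rewrite fixT inE.
Qed.

Lemma trivial_brace_additive_cyclic :
  trivial_brace add -> cyclic [set: gT] -> additive_cyclic add zero.
Proof.
move=> trivB /cyclicP[g defB]; exists g => x.
have /cycleP[n ->] : x \in <[g]> by rewrite -defB inE.
exists n; elim: n => [|n IHn] /=; first by rewrite expg0 brace_zero.
by rewrite expgS trivB IHn.
Qed.

End Brace.

Theorem mainTheorem5 (gT : finGroupType) (add : gT -> gT -> gT)
  (opp : gT -> gT) (zero : gT) :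
  is_left_brace add opp zero ->
  simple_brace add opp zero ->
  (([set: gT] : {set gT})^`(2) = 1)%g ->
  (forall (p : nat) (P : {group gT}), (p.-Sylow([set: gT]) P)%g -> abelian P) ->
  (exists (p : nat) (P : {group gT}),
      [/\ prime p, p %| #|gT| , (p.-Sylow([set: gT]) P)%g & cyclic P]) ->
  (exists p k : nat, prime p /\ #|gT| = p ^ k) /\
  trivial_brace add /\ additive_cyclic add zero.
Proof.
move=> braceB simpleB dG2 _ [p [P [p_pr p_dvd sylP cycP]]].
have ntP : (P :!=: 1)%g.
  rewrite trivg_card1 (card_Hall sylP) cardsT p_part_eq1 negbK mem_primes p_pr p_dvd.
  by rewrite andbT; apply/card_gt0P; exists 1%g.
have pB : (p.-group [set: gT])%g.
  apply: (metabelian_cyclic_Sylow_pgroup _ dG2 sylP cycP ntP) => pi H hallH nsH.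
  exact: (simple_brace_normal_Hall braceB simpleB hallH nsH).
have cycB : cyclic [set: gT] by rewrite -(pHall_id sylP pB).
have trivB := simple_abelian_pgroup_trivial_brace braceB simpleB
  (cyclic_abelian cycB) p_pr p_dvd pB.
have [k cardB] := p_natP pB.
split; first by exists p, k; rewrite -cardsT cardB.
by split; last exact: trivial_brace_additive_cyclic braceB trivB cycB.
Qed.
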